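(* Let $p>1$, $x^0\in\mathbb{R}^n$, and let $\varphi:\mathbb{R}^n\to\mathbb{R}\cup\{+\infty\}$ be a proper lower semicontinuous coercive function. If for some $r>0$ and $\lambda\in\mathbb{R}$ we have $\{x:\varphi(x)\le\varphi(x^0)+\lambda\}\subseteq\mathbb{B}(0;r)$, then there exists $\hat\gamma>0$ such that for each $\gamma\in(0,\hat\gamma]$, $\{x:\varphi^p_\gamma(x)\le\varphi^p_\gamma(x^0)+\lambda\}\subseteq\mathbb{B}(0;r)$.
   Context: $\varphi^p_\gamma(x):=\inf_{y\in\mathbb{R}^n}\big(\varphi(y)+\frac{1}{p\gamma}\|x-y\|^p\big)$ (high-order Moreau envelope); $\mathbb{B}(0;r)$ is the open Euclidean ball of radius $r$ centered at the origin. *)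

From HB Require Import structures.
From mathcomp Require Import all_boot all_order all_algebra.
From mathcomp Require Import all_classical all_reals all_analysis.
Set Implicit Arguments. Unset Strict Implicit. Unset Printing Implicit Defensive.
Import Order.TTheory GRing.Theory Num.Theory.
Local Open Scope classical_set_scope.
Local Open Scope ring_scope.

Definition enorm {R : realType} {n : nat} (x : 'rV[R]_n) : R :=
  Num.sqrt (\sum_(i < n) x ord0 i ^+ 2).

(* phi : R^n -> R u {+oo} : extended-real valued, never -oo *)
Definition no_minf {R : realType} {n : nat} (phi : 'rV[R]_n -> \bar R) : Prop :=
  forall x, phi x != -oo%E.

Definition proper_fun {R : realType} {n : nat} (phi : 'rV[R]_n -> \bar R) : Prop :=
  no_minf phi /\ exists x, phi x != +oo%E.

Definition lsc {R : realType} {n : nat} (phi : 'rV[R]_n -> \bar R) : Prop :=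
  forall x (t : R), (t%:E < phi x)%E ->
    exists2 d : R, 0 < d & forall y, enorm (y - x) < d -> (t%:E < phi y)%E.

Definition coercive {R : realType} {n : nat} (phi : 'rV[R]_n -> \bar R) : Prop :=
  forall M : R, exists R0 : R, forall x, R0 < enorm x -> (M%:E <= phi x)%E.

Definition moreau {R : realType} {n : nat} (phi : 'rV[R]_n -> \bar R)
    (p gamma : R) (x : 'rV[R]_n) : \bar R :=
  ereal_inf [set (phi y + ((enorm (x - y)) `^ p / (p * gamma))%:E)%E | y in [set: 'rV[R]_n]].

Definition euclid_ball0 {R : realType} {n : nat} (r : R) : set 'rV[R]_n :=
  [set x | enorm x < r].

(* Put c := phi x0 + lam, so that phi > c outside B(0; r).  Lower semicontinuity
   on a compact annulus, together with coercivity, makes this margin uniform: there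
   are eta > 0 and L > c such that phi >= L within distance eta of every x outside
   the ball; moreover phi is bounded below by some m.  For such x, every y either
   lies within eta of x, so that phi y >= L, or pays the penalty
   |x - y|^p / (p gamma) >= eta^p / (p gamma) >= L - m once gamma is small.  Hence
   the envelope at x is at least L > c, whereas the envelope at x0 is at most phi x0. *)

From HB Require Import structures.
From mathcomp Require Import all_boot all_order all_algebra.
From mathcomp Require Import all_classical all_reals all_analysis.
From mathcomp Require Import lra ring finmap.
Import Order.TTheory GRing.Theory Num.Theory numFieldNormedType.Exports.
Local Open Scope classical_set_scope.
Local Open Scope ring_scope.

Section EuclideanNorm.
Context {R : realType} {n : nat}.
Implicit Types x y : 'rV[R]_n.

Lemma enorm_ge0 x : 0 <= enorm x.
Proof. exact: sqrtr_ge0. Qed.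

Lemma enorm_sqr x : enorm x ^+ 2 = \sum_(i < n) x ord0 i ^+ 2.
Proof. by rewrite sqr_sqrtr // sumr_ge0 // => i _; rewrite sqr_ge0. Qed.

Lemma enorm0 : enorm (0 : 'rV[R]_n) = 0.
Proof. by rewrite /enorm big1 ?sqrtr0 // => i _; rewrite mxE expr0n. Qed.

Lemma enorm_distC x y : enorm (x - y) = enorm (y - x).
Proof.
by rewrite /enorm; congr Num.sqrt; apply: eq_bigr => i _; rewrite !mxE -sqrrN opprB.
Qed.

Lemma CauchySchwarz_sqr x y :
  (\sum_(i < n) x ord0 i * y ord0 i) ^+ 2 <=
  (\sum_(i < n) x ord0 i ^+ 2) * (\sum_(i < n) y ord0 i ^+ 2).
Proof.
pose g i j := x ord0 i ^+ 2 * y ord0 j ^+ 2 -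
              x ord0 i * y ord0 i * (x ord0 j * y ord0 j).
have -> : (\sum_(i < n) x ord0 i ^+ 2) * (\sum_(i < n) y ord0 i ^+ 2) =
    (\sum_(i < n) x ord0 i * y ord0 i) ^+ 2 + \sum_(i < n) \sum_(j < n) g i j.
  rewrite [in RHS]expr2 !big_distrlr -big_split /=; apply: eq_bigr => i _.
  rewrite -big_split; apply: eq_bigr => j _; by rewrite /= addrC subrK.
(* Lagrange's identity: the double sum is half a sum of squares. *)
rewrite lerDl -(pmulrn_lge0 _ (ltn0Sn 1)) mulr2n [X in _ + X]exchange_big.
rewrite -big_split; apply: sumr_ge0 => i _; rewrite -big_split; apply: sumr_ge0 => j _ /=.
have -> : g i j + g j i = (x ord0 i * y ord0 j - x ord0 j * y ord0 i) ^+ 2.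
  by rewrite /g; ring.
exact: sqr_ge0.
Qed.

Lemma CauchySchwarz_enorm x y :
  \sum_(i < n) x ord0 i * y ord0 i <= enorm x * enorm y.
Proof.
rewrite /enorm -sqrtrM; last by rewrite sumr_ge0 // => i _; rewrite sqr_ge0.
apply: le_trans (ler_norm _) _; rewrite -sqrtr_sqr ler_sqrt ?CauchySchwarz_sqr //.
by rewrite mulr_ge0 // sumr_ge0 // => i _; rewrite sqr_ge0.
Qed.

Lemma ler_enormD x y : enorm (x + y) <= enorm x + enorm y.
Proof.
rewrite -(@ler_pXn2r _ 2) ?nnegrE ?addr_ge0 ?enorm_ge0 //.
have expand : \sum_(i < n) (x + y) ord0 i ^+ 2 = \sum_(i < n) x ord0 i ^+ 2 +
    \sum_(i < n) y ord0 i ^+ 2 + (\sum_(i < n) x ord0 i * y ord0 i) *+ 2.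
  rewrite -sumrMnl -!big_split /=; apply: eq_bigr => i _.
  by rewrite mxE !mulr2n; ring.
by rewrite enorm_sqr expand sqrrD !enorm_sqr [X in _ <= X]addrAC lerD2l lerMn2r CauchySchwarz_enorm orbT.
Qed.

Lemma ler_enorm_dist x y : `|enorm x - enorm y| <= enorm (x - y).
Proof.
have := ler_enormD (x - y) y; have := ler_enormD (y - x) x.
rewrite !subrK enorm_distC ler_norml; lra.
Qed.

Lemma normr_coord_le_enorm x i : `|x ord0 i| <= enorm x.
Proof.
rewrite -sqrtr_sqr /enorm ler_sqrt; last by rewrite sumr_ge0 // => j _; rewrite sqr_ge0.
by rewrite (bigD1 i) //= lerDl sumr_ge0 // => j _; rewrite sqr_ge0.
Qed.

Lemma mx_norm_le_enorm x : `|x| <= enorm x.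
Proof.
rewrite [leLHS]/Num.Def.normr /= mx_normrE.
by apply: bigmax_le => [|[a i] _]; rewrite ?enorm_ge0 // (ord1 a) normr_coord_le_enorm.
Qed.

Lemma enorm_le_mx_norm x : enorm x <= n%:R * `|x|.
Proof.
have coord_le i : `|x ord0 i| <= `|x|.
  by rewrite [leRHS]/Num.Def.normr /= mx_normrE; apply/bigmax_geP; right; exists (ord0, i).
rewrite /enorm -[leRHS]ger0_norm ?mulr_ge0 // -sqrtr_sqr ler_sqrt ?sqr_ge0 //.
apply: (@le_trans _ _ (\sum_(i < n) `|x| ^+ 2)).
  by apply: ler_sum => i _; rewrite -real_normK ?num_real // lerXn2r ?nnegrE.
rewrite sumr_const card_ord exprMn -[leLHS]mulr_natl ler_wpM2r ?sqr_ge0 //.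
by rewrite -natrX ler_nat; case: n => // k; rewrite expnS leq_pmulr.
Qed.

Lemma enorm_continuous : continuous (@enorm R n).
Proof.
move=> x; apply/(@cvgrPdist_lt _ _ _ _ (nbhs_filter x)) => e e0.
apply/nbhs_ballP; exists (e / n.+1%:R); first by rewrite /= divr_gt0.
move=> y; rewrite -ball_normE /= => xy.
apply: le_lt_trans (ler_enorm_dist _ _) _; apply: le_lt_trans (enorm_le_mx_norm _) _.
apply: le_lt_trans (_ : n.+1%:R * `|x - y| < e).
  by rewrite ler_wpM2r ?normr_ge0 // ler_nat.
by rewrite mulrC -ltr_pdivlMr.
Qed.

Lemma open_enorm_ball y d : open [set z | enorm (z - y) < d].
Proof.
rewrite (_ : [set z | _] = (fun z => enorm (z - y)) @^-1` [set t | t < d]) //.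
apply: open_comp; last exact: open_lt.
move=> z _; apply: continuous_comp; last exact: enorm_continuous.
by apply: continuousB; [exact: cvg_id | exact: cst_continuous].
Qed.

Lemma compact_enorm_annulus (a b : R) :
  compact [set y : 'rV[R]_n | a <= enorm y <= b].
Proof.
apply: bounded_closed_compact.
  exists b; split; first exact: num_real.
  move=> M bM y /andP[_ yb]; apply: le_trans (mx_norm_le_enorm y) _.
  by apply: le_trans yb _; exact: ltW.
have -> : [set y : 'rV[R]_n | a <= enorm y <= b] =
    enorm @^-1` [set t | a <= t] `&` enorm @^-1` [set t | t <= b].
  by apply/seteqP; split => y /=; [case/andP | case=> -> ->].
apply: closedI; apply: preimage_closed;
  by [move=> y _; exact: enorm_continuous | exact: closed_ge | exact: closed_le].
Qed.

End EuclideanNorm.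

Lemma ereal_between {R : realType} {a b : \bar R} :
  (a < b)%E -> exists2 t : R, (a < t%:E)%E & (t%:E < b)%E.
Proof.
case: a b => [a| |] [b| |] //= ab; rewrite ?lte_fin in ab.
- by exists ((a + b) / 2); rewrite lte_fin; lra.
- by exists (a + 1); rewrite ?ltry // lte_fin; lra.
- by exists (b - 1); rewrite ?ltNyr // lte_fin; lra.
- by exists 0; rewrite ?ltry ?ltNyr.
Qed.

Section LowerSemicontinuity.
Context {R : realType} {n : nat}.
Implicit Types (f : 'rV[R]_n -> \bar R) (K : set 'rV[R]_n).

Lemma lsc_compact_uniform_gt {f K} (c : \bar R) :
  c != +oo%E -> lsc f -> compact K -> (forall y, K y -> (c < f y)%E) ->
  exists2 eta : R, 0 < eta & exists2 m : R, (c < m%:E)%E &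
    forall y z, K y -> enorm (z - y) < eta -> (m%:E < f z)%E.
Proof.
move=> cNy lsc_f cpt_K f_gt_c.
have local y : exists td : R * R, K y ->
    [/\ (c < td.1%:E)%E, 0 < td.2 &
        forall z, enorm (z - y) < td.2 -> (td.1%:E < f z)%E].
  have [Ky|nKy] := pselect (K y); last by exists (0, 0) => /nKy.
  have [t ct tf] := ereal_between (f_gt_c y Ky).
  by have [d d0 fd] := lsc_f y t tf; exists (t, d).
have [td tdP] := choice local.
(* Half radii: a point within [eta] of [ball i] is within [(td i).2] of [i]. *)
pose ball y := [set z | enorm (z - y) < (td y).2 / 2].
have [D DK KD] : exists2 D : {fset 'rV[R]_n}, {subset D <= K} &
    K `<=` \bigcup_(y in [set` D]) ball y.
  rewrite compact_cover in cpt_K; apply: (cpt_K _ K ball) => [y _|y Ky].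
    exact: open_enorm_ball.
  by exists y => //; rewrite /ball /= subrr enorm0 divr_gt0 //; case: (tdP y Ky).
have [t0 ct0 _] : exists2 t0 : R, (c < t0%:E)%E & (t0%:E < +oo)%E.
  by apply: ereal_between; rewrite ltey.
pose eta := \big[Num.min/1]_(y <- D) ((td y).2 / 2).
pose m := \big[Num.min/t0]_(y <- D) (td y).1.
exists eta.
  rewrite /eta big_seq; elim/big_ind: _ => // [a b a0 b0|y /DK/set_mem Ky].
    by rewrite lt_min a0 b0.
  by case: (tdP y Ky) => _ d0 _; rewrite divr_gt0.
exists m.
  rewrite /m big_seq; elim/big_ind: _ => // [a b ca cb|y /DK/set_mem Ky].
    by rewrite EFin_min lt_min ca cb.
  by case: (tdP y Ky).
move=> y z Ky zy; have [i Di yi] := KD y Ky; have [_ _ f_gt] := tdP i (set_mem (DK i Di)).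
apply: le_lt_trans (f_gt z _); first by rewrite lee_fin ge_bigmin_seq.
have eta_le : eta <= (td i).2 / 2 by rewrite ge_bigmin_seq.
have := ler_enormD (z - y) (y - i); rewrite addrA subrK /ball /= in yi *; lra.
Qed.

Lemma lsc_coercive_bounded_below {f} :
  no_minf f -> lsc f -> coercive f -> exists m : R, forall y, (m%:E <= f y)%E.
Proof.
move=> f_gtNy lsc_f coer_f; have [R0 f_ge0] := coer_f 0.
have f_gtNy_ball y : 0 <= enorm y <= R0 -> (-oo < f y)%E.
  by rewrite ltNye f_gtNy.
have [eta eta_gt0 [m _ f_gt_m]] := lsc_compact_uniform_gt -oo%E isT lsc_f
  (compact_enorm_annulus 0 R0) f_gtNy_ball.
exists (Num.min m 0) => y; have [yR0|yR0] := ltP R0 (enorm y).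
  by apply: le_trans (f_ge0 y yR0); rewrite lee_fin ge_min lexx orbT.
apply/ltW/(le_lt_trans _ (f_gt_m y y _ _)); first by rewrite lee_fin ge_min lexx.
  by rewrite /= enorm_ge0.
by rewrite subrr enorm0.
Qed.

Lemma lsc_coercive_gt_near_exterior {f} (c r : R) :
  lsc f -> coercive f -> (forall y, r <= enorm y -> (c%:E < f y)%E) ->
  exists2 eta : R, 0 < eta & exists2 L : R, c < L &
    forall x, r <= enorm x -> forall y, enorm (x - y) < eta -> (L%:E <= f y)%E.
Proof.
move=> lsc_f coer_f f_gt_c; have [R0 f_ge] := coer_f (c + 1).
have f_gt_c_annulus y : r <= enorm y <= R0 + 1 -> (c%:E < f y)%E.
  by case/andP => /f_gt_c.
have [eta eta_gt0 [m c_lt_m f_gt_m]] := lsc_compact_uniform_gt c%:E isT lsc_f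
  (compact_enorm_annulus r (R0 + 1)) f_gt_c_annulus.
exists (Num.min eta 1); first by rewrite lt_min eta_gt0 ltr01.
exists (Num.min m (c + 1)); first by rewrite lt_min -lte_fin c_lt_m /=; lra.
move=> x rx y; rewrite lt_min => /andP[xy_eta xy_1].
have [yR0|yR0] := ltP R0 (enorm y).
  by apply: le_trans (f_ge y yR0); rewrite lee_fin ge_min lexx orbT.
apply/ltW/(le_lt_trans _ (f_gt_m x y _ _)); first by rewrite lee_fin ge_min lexx.
  by have := ler_enormD (x - y) y; rewrite subrK /= rx /=; lra.
by rewrite enorm_distC.
Qed.

End LowerSemicontinuity.

Section MoreauEnvelope.
Context {R : realType} {n : nat}.
Implicit Types (phi : 'rV[R]_n -> \bar R) (x : 'rV[R]_n).

Lemma moreau_le phi (p gamma : R) x :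
  0 < p -> (moreau phi p gamma x <= phi x)%E.
Proof.
move=> p_gt0; apply: ge_ereal_inf; exists (phi x) => //; exists x => //.
by rewrite subrr enorm0 powR0 ?gt_eqF // mul0r adde0.
Qed.

Lemma le_moreau {phi} {p gamma eta m L : R} {x} :
  0 < p -> 0 < gamma -> 0 <= eta ->
  (forall y, (m%:E <= phi y)%E) ->
  (forall y, enorm (x - y) < eta -> (L%:E <= phi y)%E) ->
  L - m <= eta `^ p / (p * gamma) -> (L%:E <= moreau phi p gamma x)%E.
Proof.
move=> p_gt0 gamma_gt0 eta_ge0 phi_ge_m phi_ge_L gap.
apply: le_ereal_inf_tmp => _ [y _ <-].
have pg_gt0 : 0 < p * gamma by rewrite mulr_gt0.
have [near|far] := ltP (enorm (x - y)) eta.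
  apply: le_trans (leeDl _ _); first exact: phi_ge_L.
  by rewrite lee_fin divr_ge0 ?powR_ge0 ?ltW.
rewrite -[L](subrK m) addrC EFinD; apply: leeD => //; rewrite lee_fin.
apply: (le_trans gap); rewrite ler_pM2r ?invr_gt0 //.
by apply: ge0_ler_powR; rewrite ?nnegrE ?enorm_ge0 // ltW.
Qed.

End MoreauEnvelope.

Lemma penalty_ge_near0 {R : realType} (p eta d : R) : 0 < p -> 0 < eta ->
  exists2 ghat : R, 0 < ghat &
    forall gamma, 0 < gamma -> gamma <= ghat -> d <= eta `^ p / (p * gamma).
Proof.
move=> p_gt0 eta_gt0; have A_gt0 : 0 < eta `^ p by rewrite powR_gt0.
have d1_gt0 : 0 < `|d| + 1 by rewrite ltr_wpDl.
exists (eta `^ p / (p * (`|d| + 1))); first by rewrite !divr_gt0 ?mulr_gt0.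
move=> gamma gamma_gt0; rewrite ler_pdivlMr ?mulr_gt0 // => small.
have : `|d| + 1 <= eta `^ p / (p * gamma).
  rewrite ler_pdivlMr ?mulr_gt0 //.
  by have -> : (`|d| + 1) * (p * gamma) = gamma * (p * (`|d| + 1)) by ring.
have := ler_norm d; lra.
Qed.

Theorem corollary1 (R : realType) (n : nat) (p : R) (x0 : 'rV[R]_n)
  (phi : 'rV[R]_n -> \bar R) (r lam : R) :
  1 < p -> proper_fun phi -> lsc phi -> coercive phi -> 0 < r ->
  [set x | (phi x <= phi x0 + lam%:E)%E] `<=` euclid_ball0 r ->
  exists2 ghat : R, 0 < ghat &
    forall gamma : R, 0 < gamma -> gamma <= ghat ->
      [set x | (moreau phi p gamma x <= moreau phi p gamma x0 + lam%:E)%E]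
        `<=` euclid_ball0 r.
Proof.
move=> p_gt1 [phi_gtNy _] lsc_phi coer_phi r_gt0 sublevel_in_ball.
have p_gt0 : 0 < p by lra.
have [phix0_y|phix0_fin] := eqVneq (phi x0) +oo%E.
  exists 1 => // gamma _ _ x _; apply: sublevel_in_ball.
  by rewrite /= phix0_y addye ?leey.
set c := fine (phi x0) + lam.
have phix0_lam : (phi x0 + lam%:E)%E = c%:E.
  by rewrite -{1}[phi x0]fineK ?fin_numE ?phix0_fin ?phi_gtNy.
have phi_gt_c y : r <= enorm y -> (c%:E < phi y)%E.
  move=> ry; rewrite ltNge -phix0_lam; apply/negP => /sublevel_in_ball.
  by rewrite /euclid_ball0 /=; lra.
have [m phi_ge_m] := lsc_coercive_bounded_below phi_gtNy lsc_phi coer_phi.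
have [eta eta_gt0 [L c_lt_L phi_ge_L]] :=
  lsc_coercive_gt_near_exterior c r lsc_phi coer_phi phi_gt_c.
have [ghat ghat_gt0 penalty] := penalty_ge_near0 p eta (L - m) p_gt0 eta_gt0.
exists ghat => // gamma gamma_gt0 gamma_le x /= Mx_le.
rewrite /euclid_ball0 /= ltNge; apply/negP => rx.
have L_le_Mx := le_moreau p_gt0 gamma_gt0 (ltW eta_gt0) phi_ge_m (phi_ge_L x rx)
  (penalty _ gamma_gt0 gamma_le).
have := le_trans L_le_Mx (le_trans Mx_le (leeD2r _ (moreau_le phi p gamma x0 p_gt0))).
by rewrite phix0_lam lee_fin; lra.
Qed.
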